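(* Let $G=(V,E)$ be a simple, connected graph with maximum degree $\Delta$, and let $V = A \cup B \cup C$ be a partition into pairwise disjoint sets ($C$ possibly empty) satisfying: (1) every $v \in A$ satisfies $d_B(v) \geq d_A(v) + \max\{1, d_C(v)\}$; (2) every $v \in B$ satisfies $d_A(v) \geq d_B(v) + \max\{1, d_C(v)\}$; (3) $d_C(v) = 0$ for all $v \in C$; (4) every $v \in C$ satisfies $d_A(v) = d_B(v)$; (5) $\# E(A \cup B, C) + 2\# E(A,A) + 2\# E(B,B) \leq 2\# E(A,B)$. Then the number of edges between $A \cup C$ and $B$ satisfies $$\# E(A \cup C, B) \geq \left(\frac{1}{2} + \frac{1}{3\Delta}\right)|E|.$$
   Context: For a vertex $v$ and a set $S \subseteq V$, $d_S(v)$ denotes the number of neighbors of $v$ in $S$. For disjoint $X,Y \subseteq V$, $\# E(X,Y)$ is the number of edges with one endpoint in $X$ and the other in $Y$; $\# E(X,X)$ is the number of edges with both endpoints in $X$. *)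

From mathcomp Require Import all_boot all_order all_algebra.
Set Implicit Arguments. Unset Strict Implicit. Unset Printing Implicit Defensive.

Definition simple_graph (T : finType) (e : rel T) : Prop :=
  symmetric e /\ irreflexive e.

Definition connected_graph (T : finType) (e : rel T) : Prop :=
  forall x y : T, connect e x y.

Definition deg_in (T : finType) (e : rel T) (S : {set T}) (v : T) : nat :=
  #|[set u in S | e v u]|.

Definition max_degree (T : finType) (e : rel T) : nat :=
  \max_(v : T) #|[set u | e v u]|.

Definition edges (T : finType) (e : rel T) : {set {set T}} :=
  [set [set x; y] | x in T, y in T & e x y].

Definition nedges_between (T : finType) (e : rel T) (X Y : {set T}) : nat :=
  #|[set f in edges e | [exists x in X, exists y in Y, f == [set x; y]]]|.

Definition nedges_within (T : finType) (e : rel T) (X : {set T}) : nat :=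
  #|[set f in edges e | f \subset X]|.

From mathcomp Require Import all_boot all_order all_algebra.
From mathcomp Require Import zify ring lra.
Import GRing.Theory Num.Theory.
Set Implicit Arguments. Unset Strict Implicit.

(* Write [nadj X Y] for the number of ordered adjacent pairs in X x Y; it is
   #E(X,Y) for disjoint X, Y and 2 #E(X,X) for X = Y.  A vertex v of A has
   d_B(v) - d_A(v) >= max(1, d_C(v)) and d(v) <= Δ, whence
   2 d(v) + 2 d_C(v) + 3Δ d_A(v) <= 3Δ d_B(v); summing over A (and likewise
   over B) bounds the pairs inside A, B and towards C by the pairs between A
   and B.  By (3) and (4), C adds only #E(A,C) = #E(B,C) to the degree sum
   2|E|, and combining the three inequalities gives
   (3Δ + 2) |E| <= 6Δ (#E(A,B) + #E(C,B)) <= 6Δ #E(A ∪ C, B). *)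

Lemma disjoint_setUl (T : finType) (X Y Z : {set T}) :
  [disjoint X :|: Y & Z] = [disjoint X & Z] && [disjoint Y & Z].
Proof. by rewrite -!setI_eq0 setIUl setU_eq0. Qed.

Lemma surplus_deg_ineq (p q r D : nat) : p + maxn 1 r <= q -> p + q + r <= D ->
  2 * (p + q + r) + 2 * r + 3 * D * p <= 3 * D * q.
Proof.
(* q - p >= max(1, r) gives 3 (q - p) >= 2 + r, and r >= 1 forces D >= 2. *)
by move=> *; nia.
Qed.

Section Adjacency.
Variables (T : finType) (e : rel T).

Definition nadj (X Y : {set T}) : nat := \sum_(x in X) deg_in e Y x.

Lemma deg_inE (Y : {set T}) v : deg_in e Y v = \sum_(u in Y) (e v u : nat).
Proof.
rewrite /deg_in -sum1_card big_mkcond [RHS]big_mkcond /=.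
by apply: eq_bigr => u _; rewrite inE; case: (u \in Y); case: (e v u).
Qed.

Lemma deg_inU (Y1 Y2 : {set T}) v : [disjoint Y1 & Y2] ->
  deg_in e (Y1 :|: Y2) v = deg_in e Y1 v + deg_in e Y2 v.
Proof.
by move=> dY; rewrite !deg_inE -bigU //; apply: eq_bigl => u; rewrite inE.
Qed.

Lemma nadjUl (X1 X2 Y : {set T}) : [disjoint X1 & X2] ->
  nadj (X1 :|: X2) Y = nadj X1 Y + nadj X2 Y.
Proof. by move=> dX; rewrite /nadj -bigU //; apply: eq_bigl => u; rewrite inE. Qed.

Lemma nadjUr (X Y1 Y2 : {set T}) : [disjoint Y1 & Y2] ->
  nadj X (Y1 :|: Y2) = nadj X Y1 + nadj X Y2.
Proof. by move=> dY; rewrite /nadj -big_split; apply: eq_bigr => x _; apply: deg_inU. Qed.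

Lemma nadjC (X Y : {set T}) : symmetric e -> nadj X Y = nadj Y X.
Proof.
move=> sym_e; rewrite /nadj.
under eq_bigr do rewrite deg_inE.
under [RHS]eq_bigr do rewrite deg_inE.
by rewrite exchange_big; apply: eq_bigr => y _; apply: eq_bigr => x _; rewrite sym_e.
Qed.

Lemma nadj_card_pairs (X Y : {set T}) :
  nadj X Y = #|[set p : T * T | [&& p.1 \in X, p.2 \in Y & e p.1 p.2]]|.
Proof.
rewrite /nadj; under eq_bigr do rewrite deg_inE.
rewrite pair_big_dep /= -sum1_card big_mkcond [RHS]big_mkcond /=.
apply: eq_bigr => -[x y] _; rewrite inE /=.
by case: (x \in X); case: (y \in Y); case: (e x y).
Qed.

Lemma nadj_le_nedges_between (X Y : {set T}) : [disjoint X & Y] ->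
  nadj X Y <= nedges_between e X Y.
Proof.
move=> dXY; rewrite nadj_card_pairs.
rewrite -(@card_in_imset _ _ (fun p : T * T => [set p.1; p.2])); last first.
  move=> [x y] [x' y']; rewrite !inE /= => /and3P[xX yY _] /and3P[x'X y'Y _] Exy.
  have XY z : z \in X -> z \in Y -> False by move=> zX; rewrite (disjointFr dXY zX).
  have : x \in [set x'; y'] by rewrite -Exy set21.
  have : y \in [set x'; y'] by rewrite -Exy set22.
  rewrite !inE => /orP[]/eqP hy /orP[]/eqP hx; subst => //; by [case: (XY x') | case: (XY y')].
apply/subset_leq_card/subsetP => f /imsetP[[x y]].
rewrite !inE /= => /and3P[xX yY exy] ->; apply/andP; split.
  by apply/imset2P; exists x y; rewrite ?inE.
by apply/existsP; exists x; rewrite xX; apply/existsP; exists y; rewrite yY /=.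
Qed.

Lemma double_card_edges_le : simple_graph e -> 2 * #|edges e| <= nadj setT setT.
Proof.
case=> sym_e irr_e; rewrite nadj_card_pairs -[X in _ <= X]sum1_card.
rewrite (partition_big (fun p : T * T => [set p.1; p.2]) (mem (edges e))) /=; last first.
  by move=> [x y]; rewrite !inE /= => exy; apply/imset2P; exists x y; rewrite ?inE.
rewrite mulnC -sum_nat_const; apply: leq_sum => f /imset2P[x y _]; rewrite inE => /andP[_ exy] ->.
have yx_neq_xy : (y, x) != (x, y).
  by apply/eqP => -[yx]; rewrite yx irr_e in exy.
rewrite (bigD1 (x, y)) ?inE ?exy ?eqxx //= (bigD1 (y, x)) //=.
by rewrite !inE sym_e exy yx_neq_xy setUC eqxx.
Qed.

Lemma deg_le_max_degree (v : T) : deg_in e setT v <= max_degree e.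
Proof.
rewrite /deg_in (_ : [set u in setT | e v u] = [set u | e v u]); last first.
  by apply/setP => u; rewrite !inE.
exact: (leq_bigmax (F := fun v => #|[set u | e v u]|)).
Qed.

Lemma nadj_surplus (X Y Z : {set T}) (D : nat) :
  (forall v, v \in X -> deg_in e X v + maxn 1 (deg_in e Z v) <= deg_in e Y v) ->
  (forall v, v \in X -> deg_in e X v + deg_in e Y v + deg_in e Z v <= D) ->
  2 * (nadj X X + nadj X Y + nadj X Z) + 2 * nadj X Z + 3 * D * nadj X X
    <= 3 * D * nadj X Y.
Proof.
move=> surplus degD; rewrite /nadj -!big_split !big_distrr -!big_split /=.
by apply: leq_sum => v vX; apply: surplus_deg_ineq (surplus v vX) (degD v vX).
Qed.

End Adjacency.

Lemma cut_weight_ineq (N M D aa ab ac bb bc : nat) :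
  2 * N <= aa + 2 * ab + bb + 2 * ac + 2 * bc -> ab + bc <= M -> ac <= bc ->
  2 * (aa + ab + ac) + 2 * ac + 3 * D * aa <= 3 * D * ab ->
  2 * (bb + ab + bc) + 2 * bc + 3 * D * bb <= 3 * D * ab ->
  3 * D * N + 2 * N <= 6 * D * M.
Proof.
(* 2 (3D + 2) N <= (3D + 2) (aa + 2 ab + bb + 2 ac + 2 bc) <= 12 D (ab + bc) <= 12 D M *)
move=> *; nia.
Qed.

Lemma ratio_bound_of_nat (R : realFieldType) (D N M : nat) :
  3 * D * N + 2 * N <= 6 * D * M ->
  ((1 / 2 + 1 / (3 * D%:R)) * N%:R <= M%:R :> R)%R.
Proof.
rewrite -(ler_nat R) !natrD !natrM => hNM.
have M_ge0 := ler0n R M.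
have [D0 | D_gt0] := posnP D.
  by move: hNM; rewrite D0 !mulr0 !mul0r invr0 mulr0 addr0; lra.
have d_gt0 : (0 < D%:R :> R)%R by rewrite ltr0n.
rewrite -(ler_pM2l (_ : 0 < 6 * D%:R)%R); last by lra.
have -> : (6 * D%:R * ((1 / 2 + 1 / (3 * D%:R)) * N%:R) = 3 * D%:R * N%:R + 2 * N%:R :> R)%R.
  by field; lra.
lra.
Qed.

Theorem corollary3 (T : finType) (e : rel T) (A B C : {set T}) :
  simple_graph e -> connected_graph e ->
  [disjoint A & B] -> [disjoint A & C] -> [disjoint B & C] ->
  A :|: B :|: C = [set: T] ->
  (forall v, v \in A ->
     (deg_in e B v >= deg_in e A v + maxn 1 (deg_in e C v))%N) ->
  (forall v, v \in B ->
     (deg_in e A v >= deg_in e B v + maxn 1 (deg_in e C v))%N) ->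
  (forall v, v \in C -> deg_in e C v = 0%N) ->
  (forall v, v \in C -> deg_in e A v = deg_in e B v) ->
  (nedges_between e (A :|: B) C + 2 * nedges_within e A + 2 * nedges_within e B
     <= 2 * nedges_between e A B)%N ->
  ((1 / 2 + 1 / (3 * (max_degree e)%:R)) * (#|edges e|)%:R
     <= ((nedges_between e (A :|: C) B)%:R : rat))%R.
Proof.
move=> simple_e _ dAB dAC dBC cover surplusA surplusB noCC balancedC _.
have sym_e := simple_e.1.
have dABC : [disjoint A :|: B & C] by rewrite disjoint_setUl dAC dBC.
have dACB : [disjoint A :|: C & B] by rewrite disjoint_setUl dAB disjoint_sym dBC.
have degA v : deg_in e A v + deg_in e B v + deg_in e C v <= max_degree e.
  by rewrite -!deg_inU // cover; apply: deg_le_max_degree.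
have degB v : deg_in e B v + deg_in e A v + deg_in e C v <= max_degree e.
  by rewrite (addnC (deg_in e B v)).
have sumA := nadj_surplus surplusA (fun v _ => degA v).
have sumB := nadj_surplus surplusB (fun v _ => degB v).
have nadjCC : nadj e C C = 0 by apply: big1 => v /noCC.
have nadjCA : nadj e C A = nadj e C B := eq_bigr _ balancedC.
have handshake := double_card_edges_le simple_e.
rewrite -cover !(nadjUl, nadjUr) // in handshake.
rewrite (nadjC B A) // in handshake sumB.
rewrite (nadjC C A) // (nadjC C B) // in handshake nadjCA.
have cut : nadj e A B + nadj e B C <= nedges_between e (A :|: C) B.
  by rewrite (nadjC B C) // -nadjUl //; apply: nadj_le_nedges_between.
by apply: ratio_bound_of_nat; apply: (cut_weight_ineq _ cut _ sumA sumB); lia.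
Qed.
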